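(* Let $F$ be a nontrivial finite group, $\tfrac12<p<1$, $\lambda=\frac{p}{1-p}$, and $\alpha=\frac{\log|F|}{\log\lambda}$. Then there exist constants $m_0$ and $0<c\le C$ depending only on $p$ and $|F|$ such that for every integer $m\ge m_0$, \[\frac{c}{m^{\alpha}}\le\sum_{a=1}^{\infty}|F|^{-a}\Big(1-\frac{\lambda-1}{\lambda^a-1}\Big)^m\le\frac{C}{m^{\alpha}}.\] *)

From HB Require Import structures.
From mathcomp Require Import all_boot all_order all_algebra all_fingroup.
From mathcomp Require Import all_classical all_reals all_analysis.
Set Implicit Arguments. Unset Strict Implicit. Unset Printing Implicit Defensive.
Import Order.TTheory GRing.Theory Num.Theory.
Local Open Scope ring_scope.

Definition lam {R : realType} (p : R) : R := p / (1 - p).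

Definition alpha {R : realType} (n : nat) (p : R) : R := ln (n%:R) / ln (lam p).

Definition summand {R : realType} (n : nat) (p : R) (m a : nat) : R :=
  (n%:R ^- a) * (1 - (lam p - 1) / (lam p ^+ a - 1)) ^+ m.

(* Write L = lam p > 1, N = #|F| and x_a = (L - 1) / (L^a - 1), so that the
   a-th summand is N^-a (1 - x_a)^m, N^a = (L^a)^alpha and (L - 1) / L^a <= x_a <= 1.
   Lower bound: for the a with L^a of order 2 L^2 m we have m x_a <= 1/2, hence
   (1 - x_a)^m >= 1/2 by Bernoulli, while N^-a >= (2 L^2)^-alpha m^-alpha.
   Upper bound: fix j with N < L^j and let k = m %/ j.  Since
   (1 - x)^m (1 + x)^m <= 1 and (k x)^j <= (1 + x)^(k j) <= (1 + x)^m, the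
   a-th summand is at most (L^j / N)^a / (k (L - 1))^j, a geometric sequence
   of ratio > 1.  Summing it below the a0 with L^a0 <= m < L^(a0+1), and the
   trivial bound N^-a above a0, both parts are O(N^-a0) = O(m^-alpha). *)

From HB Require Import structures.
From mathcomp Require Import all_boot all_order all_algebra all_fingroup.
From mathcomp Require Import all_classical all_reals all_analysis.
From mathcomp Require Import lra zify.
Set Implicit Arguments. Unset Strict Implicit. Unset Printing Implicit Defensive.
Import Order.TTheory GRing.Theory Num.Theory.
Local Open Scope ring_scope.

Lemma bernoulli_ineq (R : realDomainType) (y : R) m :
  -1 <= y -> 1 + m%:R * y <= (1 + y) ^+ m.
Proof.
move=> y_ge; elim: m => [|m IHm]; first by rewrite mul0r addr0 expr0.
have y1_ge0 : 0 <= 1 + y by lra.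
rewrite exprSr -natr1; apply: le_trans (ler_wpM2r y1_ge0 IHm).
have : 0 <= m%:R * y ^+ 2 :> R by rewrite mulr_ge0 ?sqr_ge0.
rewrite expr2; lra.
Qed.

Lemma exists_expr_bracket (R : archiRealFieldType) (L y : R) : 1 < L -> 1 <= y ->
  exists a : nat, L ^+ a <= y < L ^+ a.+1.
Proof.
move=> L_gt1 y_ge1.
have y_lt : exists b : nat, y < L ^+ b.
  have ratio_ge0 : 0 <= (y - 1) / (L - 1) by apply: divr_ge0; lra.
  pose b := Num.bound ((y - 1) / (L - 1)); exists b.
  have := bernoulli_ineq b (_ : -1 <= L - 1); rewrite subrKC.
  have := archi_boundP ratio_ge0; rewrite -/b ltr_pdivrMr; lra.
case: (ex_minnP y_lt) => [[|a]]; first by rewrite expr0; lra.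
move=> y_lt' a_min; exists a; rewrite y_lt' andbT.
by case: leP => // /a_min; rewrite ltnn.
Qed.

Lemma ler_sum_nat_widen (R : numDomainType) (F : nat -> R) m n m' n' :
  (forall i, 0 <= F i) -> (m' <= m)%N -> (n <= n')%N ->
  \sum_(m <= i < n) F i <= \sum_(m' <= i < n') F i.
Proof.
move=> F_ge0 le_m le_n; have [le_nm|lt_mn] := leqP n m.
  by rewrite big_geq // sumr_ge0.
rewrite (big_cat_nat le_m (leq_trans (ltnW lt_mn) le_n)) /=.
rewrite [X in _ <= _ + X](big_cat_nat (ltnW lt_mn) le_n) /= addrCA lerDl.
by rewrite addr_ge0 ?sumr_ge0.
Qed.

Lemma sum_expr_le (R : realFieldType) (r : R) a :
  1 < r -> \sum_(i < a) r ^+ i <= r ^+ a / (r - 1).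
Proof.
move=> r_gt1; rewrite ler_pdivlMr; last lra.
by rewrite mulrC -subrX1 gerBl.
Qed.

Lemma sum_expr_tail_le (R : realType) (x : R) a M : 0 < x < 1 ->
  \sum_(a <= i < a + M) x ^+ i <= x ^+ a / (1 - x).
Proof.
move=> /andP[x_gt0 x_lt1]; rewrite geometric_partial_tail.
by apply: geometric_le_lim; rewrite ?exprn_ge0 ?ltW ?gtr0_norm.
Qed.

Lemma powR_ln_div (R : realType) (x y : R) : 0 < x -> 1 < y -> y `^ (ln x / ln y) = x.
Proof.
move=> x_gt0 y_gt1; rewrite /powR gt_eqF; last lra.
by rewrite divfK ?lnK // gt_eqF // ln_gt0.
Qed.

Lemma ratio_expr_bounds (R : realFieldType) (L : R) a : 1 < L -> (0 < a)%N ->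
  [/\ 0 < (L - 1) / L ^+ a, (L - 1) / L ^+ a <= (L - 1) / (L ^+ a - 1)
    & (L - 1) / (L ^+ a - 1) <= 1].
Proof.
move=> L_gt1 a_gt0; have La_ge : L <= L ^+ a.
  by rewrite -[X in X <= _]expr1 ler_weXn2l // ltW.
have La_gt0 : 0 < L ^+ a by lra.
split; first by apply: divr_gt0; lra.
  by rewrite ler_pdivrMr // mulrAC ler_pdivlMr; [nra | lra].
by rewrite ler_pdivrMr; lra.
Qed.

Lemma expr1B_mul_le1 (R : realDomainType) (x : R) k j m : 0 <= x <= 1 ->
  (k * j <= m)%N -> (1 - x) ^+ m * (k%:R * x) ^+ j <= 1.
Proof.
move=> /andP[x_ge0 x_le1] kj_le.
have kx_le : (k%:R * x) ^+ j <= (1 + x) ^+ m.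
  apply: le_trans (_ : (1 + x) ^+ (k * j) <= _); last first.
    by apply: ler_weXn2l => //; lra.
  rewrite exprM; apply: lerXn2r; rewrite ?nnegrE ?mulr_ge0 ?exprn_ge0 //; first lra.
  have := bernoulli_ineq k (_ : -1 <= x); lra.
have : (1 - x) ^+ m * (1 + x) ^+ m <= 1.
  by rewrite -exprMn; apply: exprn_ile1; nra.
have : 0 <= (1 - x) ^+ m by apply: exprn_ge0; lra.
nra.
Qed.

Lemma sum_head_tail_le (R : realType) (g : nat -> R) (c r x : R) a M :
  0 <= c -> 1 < r -> 0 < x < 1 ->
  (forall i, (0 < i < a)%N -> g i <= c * r ^+ i) ->
  (forall i, (0 < i)%N -> (a <= i)%N -> g i <= x ^+ i) ->
  \sum_(1 <= i < M) g i <= c * (r ^+ a / (r - 1)) + x ^+ a / (1 - x).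
Proof.
move=> c_ge0 r_gt1 /andP[x_gt0 x_lt1] g_head g_tail.
pose h i := if (i < a)%N then c * r ^+ i else x ^+ i.
have h_ge0 i : 0 <= h i.
  by rewrite /h; case: ifP => _; rewrite ?mulr_ge0 ?exprn_ge0 //; lra.
have sum_h_le : \sum_(1 <= i < M) g i <= \sum_(1 <= i < M) h i.
  apply: ler_sum_nat => i /andP[i_gt0 _]; rewrite /h.
  by case: ltnP => [i_lt|/(g_tail _ i_gt0) //]; apply: g_head; rewrite i_gt0.
apply: le_trans sum_h_le _.
apply: le_trans (ler_sum_nat_widen h_ge0 (leq0n 1) (leq_addl a M)) _.
rewrite (big_cat_nat (leq0n a) (leq_addr M a)) /=; apply: lerD.
  rewrite (eq_big_nat _ _ (F2 := fun i => c * r ^+ i)); last first.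
    by move=> i /andP[_ i_lt]; rewrite /h i_lt.
  by rewrite -mulr_sumr big_mkord ler_wpM2l // sum_expr_le.
rewrite (eq_big_nat _ _ (F2 := fun i => x ^+ i)); last first.
  by move=> i /andP[a_le _]; rewrite /h ltnNge a_le.
by apply: sum_expr_tail_le; rewrite x_gt0.
Qed.

Local Open Scope ereal_scope.

Lemma term_le_nneseries (R : realType) (u : nat -> \bar R) k b :
  (forall i, (k <= i)%N -> 0 <= u i) -> (k <= b)%N ->
  u b <= \sum_(k <= i <oo) u i.
Proof.
move=> u_ge0 kb; apply: le_trans (nneseries_lim_ge b.+1 (fun i ki _ => u_ge0 i ki)).
rewrite big_nat_recr //= leeDr // big_seq_cond sume_ge0 // => i.
by rewrite mem_index_iota => /andP[/andP[/u_ge0]].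
Qed.

Lemma nneseries_le_bound (R : realType) (u : nat -> \bar R) k (x : \bar R) :
  (forall i, (k <= i)%N -> 0 <= u i) ->
  (forall M, \sum_(k <= i < M) u i <= x) -> \sum_(k <= i <oo) u i <= x.
Proof.
move=> u_ge0 u_le; apply: lime_le; first by apply: is_cvg_nneseries => i /u_ge0.
exact: nearW.
Qed.

Local Close Scope ereal_scope.

Section Summand.
Variables (R : realType) (n : nat) (p : R).
Hypotheses (n_gt1 : (1 < n)%N) (p_gt_half : 1 / 2 < p) (p_lt1 : p < 1).

Local Notation L := (lam p).
Local Notation N := (n%:R : R).
Local Notation al := (alpha n p).

Lemma lam_gt1 : 1 < L.
Proof. by rewrite /lam ltr_pdivlMr; have := p_lt1; have := p_gt_half; lra. Qed.

Lemma alpha_gt0 : 0 < al.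
Proof. by rewrite /alpha divr_gt0 // ln_gt0 ?lam_gt1 // ltr1n. Qed.

Lemma exprn_powR_alpha a : N ^+ a = (L ^+ a) `^ al.
Proof.
have L_ge0 : 0 <= L by have := lam_gt1; lra.
rewrite -(powR_mulrn a L_ge0) -powRrM mulrC powRrM /alpha.
have N_gt0 : 0 < N by rewrite ltr0n ltnW.
by rewrite powR_ln_div ?lam_gt1 ?powR_mulrn ?ltW.
Qed.

Lemma exprn_le_powR_alpha a y : L ^+ a <= y -> N ^+ a <= y `^ al.
Proof.
move=> Ly; rewrite exprn_powR_alpha ge0_ler_powR ?nnegrE ?(ltW alpha_gt0) //.
  by rewrite exprn_ge0 // ltW // (lt_trans _ lam_gt1).
by rewrite (le_trans _ Ly) // exprn_ge0 // ltW // (lt_trans _ lam_gt1).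
Qed.

Lemma powR_alpha_le_exprn a y : 0 <= y -> y <= L ^+ a -> y `^ al <= N ^+ a.
Proof.
move=> y_ge0 yL; rewrite exprn_powR_alpha ge0_ler_powR ?nnegrE ?(ltW alpha_gt0) //.
by rewrite (le_trans y_ge0).
Qed.

Lemma summand_ge0 m a : (0 < a)%N -> 0 <= summand n p m a.
Proof.
move=> a_gt0; have [_ _ x_le1] := ratio_expr_bounds lam_gt1 a_gt0.
by rewrite /summand mulr_ge0 ?invr_ge0 ?exprn_ge0 // subr_ge0.
Qed.

Lemma summand_le_exprVn m a : (0 < a)%N -> summand n p m a <= N^-1 ^+ a.
Proof.
move=> a_gt0; have [x_gt0 x_ge x_le1] := ratio_expr_bounds lam_gt1 a_gt0.
rewrite /summand exprVn ler_piMr ?invr_ge0 ?exprn_ge0 // exprn_ile1 //.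
  by rewrite subr_ge0.
by rewrite gerBl (le_trans (ltW x_gt0)).
Qed.

Lemma summand_le_geometric k j m a : (0 < k)%N -> (k * j <= m)%N -> (0 < a)%N ->
  summand n p m a <= ((k%:R * (L - 1)) ^+ j)^-1 * (L ^+ j / N) ^+ a.
Proof.
move=> k_gt0 kj_le a_gt0; have L_gt1 := lam_gt1.
have [x0_gt0 x0_le x_le1] := ratio_expr_bounds L_gt1 a_gt0.
set x := (L - 1) / (L ^+ a - 1) in x0_le x_le1 *.
set x0 := (L - 1) / L ^+ a in x0_gt0 x0_le.
have k_gt0R : 0 < k%:R :> R by rewrite ltr0n.
have kx0_gt0 : 0 < k%:R * x0 by rewrite mulr_gt0.
have one_sub_x : (1 - x) ^+ m <= ((k%:R * x0) ^+ j)^-1.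
  rewrite -(ler_pM2r (exprn_gt0 j kx0_gt0)) mulVf ?gt_eqF ?exprn_gt0 //.
  apply: le_trans (expr1B_mul_le1 (_ : 0 <= x <= 1) kj_le); last first.
    by rewrite x_le1 (le_trans (ltW x0_gt0)).
  have kx0_le : k%:R * x0 <= k%:R * x by rewrite ler_wpM2l // ltW.
  rewrite ler_wpM2l ?exprn_ge0 ?subr_ge0 // lerXn2r ?nnegrE ?(ltW kx0_gt0) //.
  exact: le_trans (ltW kx0_gt0) kx0_le.
rewrite /summand -/x; apply: le_trans (ler_wpM2l _ one_sub_x) _.
  by rewrite invr_ge0 exprn_ge0.
rewrite /x0 mulrA expr_div_n invf_div [in leRHS]expr_div_n -!exprM mulnC.
by rewrite mulrCA [in leRHS]mulrCA [n%:R ^- a * _]mulrC.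
Qed.

Lemma exists_large_summand m : (0 < m)%N ->
  exists2 b, (0 < b)%N & (2 * (2 * L ^+ 2) `^ al)^-1 / m%:R `^ al <= summand n p m b.
Proof.
move=> m_gt0; have L_gt1 := lam_gt1.
have m_ge1 : 1 <= m%:R :> R by rewrite ler1n.
have [|a /andP[La_le La_gt]] := exists_expr_bracket L_gt1 (_ : 1 <= 2 * L * m%:R).
  by nra.
exists a.+1 => //; set P := L ^+ a.+1 in La_gt *.
have P_le : P <= 2 * L ^+ 2 * m%:R.
  by rewrite /P exprS expr2; nra.
have [_ _ x_le1] := ratio_expr_bounds L_gt1 (ltn0Sn a).
set x := (L - 1) / (P - 1) in x_le1 *.
have mx_le : m%:R * x <= 1 / 2.
  by rewrite /x mulrA ler_pdivrMr; nra.
have half_le : 1 / 2 <= (1 - x) ^+ m.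
  have x_ge0 : 0 <= x by apply: divr_ge0; nra.
  have := bernoulli_ineq m (_ : -1 <= - x); lra.
have NP_le : N ^+ a.+1 <= (2 * L ^+ 2) `^ al * m%:R `^ al.
  by rewrite -powRM ?exprn_le_powR_alpha // mulr_ge0 // ?exprn_ge0; lra.
have c_gt0 : 0 < (2 * L ^+ 2) `^ al * m%:R `^ al.
  by rewrite mulr_gt0 ?powR_gt0 //; nra.
rewrite /summand -/P -/x invfM -mulrA -invfM mulrC.
rewrite ler_pM ?invr_ge0 ?(ltW c_gt0) //; last by rewrite -div1r.
by rewrite lef_pV2 ?posrE // exprn_gt0 // ltr0n ltnW.
Qed.

Lemma partial_sum_summand_le_exprVn j m a0 M :
  (0 < j)%N -> N < L ^+ j -> (j <= m)%N -> L ^+ a0 <= m%:R ->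
  \sum_(1 <= a < M) summand n p m a
    <= ((2 * j%:R / (L - 1)) ^+ j / (L ^+ j / N - 1) + (1 - N^-1)^-1) * N^-1 ^+ a0.
Proof.
move=> j_gt0 N_lt jm La0_le; have L_gt1 := lam_gt1.
have N_gt1 : 1 < N by rewrite ltr1n.
set k := (m %/ j)%N; have kj_le : (k * j <= m)%N by rewrite leq_trunc_div.
have k_gt0 : (0 < k)%N by rewrite divn_gt0.
have m_le : (m <= 2 * k * j)%N by have := ltn_ceil m j_gt0; rewrite -/k; nia.
set r := L ^+ j / N; have r_gt1 : 1 < r by rewrite ltr_pdivlMr; lra.
have kL_gt0 : 0 < k%:R * (L - 1) by rewrite mulr_gt0 ?ltr0n //; lra.
set D := (k%:R * (L - 1)) ^+ j; have D_gt0 : 0 < D by rewrite exprn_gt0.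
have Ninv : 0 < N^-1 < 1 by rewrite invr_gt0 invf_lt1; lra.
have head i : (0 < i < a0)%N -> summand n p m i <= D^-1 * r ^+ i.
  by move=> /andP[i_gt0 _]; apply: summand_le_geometric.
have tail i : (0 < i)%N -> (a0 <= i)%N -> summand n p m i <= N^-1 ^+ i.
  by move=> i_gt0 _; apply: summand_le_exprVn.
have Dinv_ge0 : 0 <= D^-1 by rewrite invr_ge0 ltW.
apply: le_trans (sum_head_tail_le M Dinv_ge0 r_gt1 Ninv head tail) _.
set T := (2 * j%:R / (L - 1)) ^+ j; set w := N^-1 ^+ a0.
have La0_le' : L ^+ a0 / (k%:R * (L - 1)) <= 2 * j%:R / (L - 1).
  rewrite ler_pdivrMr // (le_trans La0_le) // mulrCA divfK; last lra.
  by rewrite -!natrM ler_nat mulnCA mulnA.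
have head_le : D^-1 * r ^+ a0 <= T * w.
  rewrite /r expr_div_n -exprM mulnC exprM /w exprVn mulrA.
  rewrite ler_wpM2r ?invr_ge0 ?exprn_ge0 ?ler0n // mulrC -expr_div_n.
  have La0_ge0 : 0 <= L ^+ a0 by rewrite exprn_ge0 //; lra.
  by rewrite lerXn2r // nnegrE divr_ge0 ?(ltW kL_gt0) //; lra.
rewrite mulrDl; apply: lerD; last by rewrite mulrC.
by rewrite mulrA [T / _ * w]mulrAC ler_wpM2r // invr_ge0; lra.
Qed.

Lemma exprVn_le_powR_alpha m a : (0 < m)%N -> m%:R < L ^+ a.+1 ->
  N^-1 ^+ a <= N / m%:R `^ al.
Proof.
move=> m_gt0 m_lt; have N_gt0 : 0 < N by rewrite ltr0n ltnW.
have m_al_gt0 : 0 < m%:R `^ al by rewrite powR_gt0 // ltr0n.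
have := powR_alpha_le_exprn (ler0n _ m) (ltW m_lt).
rewrite exprVn exprS ler_pdivlMr // => m_al_le.
by rewrite mulrC ler_pdivrMr ?exprn_gt0.
Qed.

Lemma partial_sum_summand_le j m M : (0 < j)%N -> N < L ^+ j -> (j <= m)%N ->
  \sum_(1 <= a < M) summand n p m a
    <= N * ((2 * j%:R / (L - 1)) ^+ j / (L ^+ j / N - 1) + (1 - N^-1)^-1)
         / m%:R `^ al.
Proof.
move=> j_gt0 N_lt jm; have m_gt0 : (0 < m)%N by apply: leq_trans jm.
have [|a0 /andP[La0_le m_lt]] := exists_expr_bracket lam_gt1 (_ : 1 <= m%:R).
  by rewrite ler1n.
apply: le_trans (partial_sum_summand_le_exprVn M j_gt0 N_lt jm La0_le) _.
rewrite [N * _]mulrC -[_ * N / _]mulrA ler_wpM2l ?exprVn_le_powR_alpha //.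
have L_gt1 := lam_gt1; have N_gt1 : 1 < N by rewrite ltr1n.
have r_gt1 : 1 < L ^+ j / N by rewrite ltr_pdivlMr; lra.
have Ninv_lt1 : N^-1 < 1 by rewrite invf_lt1; lra.
apply: addr_ge0; last by rewrite invr_ge0; lra.
have T_ge0 : 0 <= (2 * j%:R / (L - 1)) ^+ j.
  by rewrite exprn_ge0 // divr_ge0 ?mulr_ge0 //; lra.
by rewrite divr_ge0 //; lra.
Qed.

End Summand.

Theorem lemma2p5 (R : realType) (gT : finGroupType) (F : {group gT})
    (hF : (1 < #|F|)%N) (p : R) (hp1 : 1 / 2 < p) (hp2 : p < 1) :
  exists (m0 : nat) (c C : R), 0 < c /\ c <= C /\
    forall m : nat, (m0 <= m)%N ->
      ((c / (m%:R `^ alpha #|F| p))%:E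
         <= \sum_(1 <= a <oo) (summand #|F| p m a)%:E)%E /\
      (\sum_(1 <= a <oo) (summand #|F| p m a)%:E
         <= (C / (m%:R `^ alpha #|F| p))%:E)%E.
Proof.
have L_gt1 := lam_gt1 hp1 hp2.
have [|j0 /andP[_ N_lt]] := exists_expr_bracket L_gt1 (_ : 1 <= #|F|%:R).
  by rewrite ler1n ltnW.
set j := j0.+1; set N : R := #|F|%:R; set al := alpha #|F| p.
set c := (2 * (2 * lam p ^+ 2) `^ al)^-1.
set C := N * ((2 * j%:R / (lam p - 1)) ^+ j / (lam p ^+ j / N - 1) + (1 - N^-1)^-1).
have bounds m : (j <= m)%N -> ((c / m%:R `^ al)%:E
    <= \sum_(1 <= a <oo) (summand #|F| p m a)%:E)%E /\
  (\sum_(1 <= a <oo) (summand #|F| p m a)%:E <= (C / m%:R `^ al)%:E)%E.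
  move=> jm; have m_gt0 : (0 < m)%N by apply: leq_trans jm.
  have summand_ge0 i : (1 <= i)%N -> (0 <= (summand #|F| p m i)%:E)%E.
    by move=> i_gt0; rewrite lee_fin summand_ge0.
  split.
    have [b b_gt0 c_le] := exists_large_summand hF hp1 hp2 m_gt0.
    by apply: le_trans (term_le_nneseries summand_ge0 b_gt0); rewrite lee_fin.
  apply: nneseries_le_bound summand_ge0 _ => M.
  by rewrite sumEFin lee_fin partial_sum_summand_le.
have c_gt0 : 0 < c by rewrite invr_gt0 mulr_gt0 ?powR_gt0 //; nra.
exists j, c, C; split => //; split => //.
(* [c <= C] comes for free from the two bounds at [m = j]. *)
have [lower upper] := bounds j (leqnn j).
have j_al_inv_gt0 : 0 < (j%:R `^ al)^-1 by rewrite invr_gt0 powR_gt0 // ltr0n.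
by rewrite -(ler_pM2r j_al_inv_gt0) -lee_fin (le_trans lower upper).
Qed.
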